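(* Let $r_0$ solve $r_0'=r_0\mathcal N(r_0^2)$, $r_0(0)=\frac12$, and set $\mathcal N_0=\mathcal N(r_0^2)$ and $\mathcal N_p=\mathcal N'(r_0^2)r_0^2$. Define the real potential $$\mathcal V(x)=\big[\mathcal N_0(x)+\mathcal N_p(x)\big]_x+\big[\mathcal N_0(x)+\mathcal N_p(x)\big]^2.$$ Assume $\lambda\in\mathbb C$ and $0\ne B=(U,V)\in L^2(\mathbb R;\mathbb C^2)$ satisfy $$U_x=(\mathcal N_0+\mathcal N_p)U+\lambda V,\qquad V_x=\lambda U-(\mathcal N_0+\mathcal N_p)V.$$ Then: (i) $-\lambda^2\in\mathbb R$, and $(\mathcal E,U)=(-\lambda^2,U)$, with $0\ne U\in L^2$, is an eigenpair of $-\partial_x^2+\mathcal V(x)$, i.e. $(-\partial_x^2+\mathcal V)U=\mathcal EU$. (ii) $\mathcal E=0$ is the ground state energy (lowest eigenvalue) of $-\partial_x^2+\mathcal V(x)$.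
   Context: Nonlinearity: $\mathcal N:[0,\infty)\to\mathbb R$ is smooth, $\mathcal N'(s)<0$ for $s>0$, $\mathcal N(0)=1$, $\mathcal N(1)=0$, $\lim_{s\to\infty}\mathcal N(s)\in[-\infty,0)$, and $K:=-\mathcal N'(1)>0$. The function $r_0$ increases from $0$ at $-\infty$ to $1$ at $+\infty$. *)

From Stdlib Require Import Reals.
From Coquelicot Require Import Coquelicot.
Open Scope R_scope.

(* N is smooth on [0, +oo): all derivatives exist on (0,+oo) and each extends
   continuously to 0 from the right (N itself is right-continuous at 0). *)
Definition smooth_on_nonneg (N : R -> R) : Prop :=
  (forall n x, 0 < x -> ex_derive_n N n x) /\
  filterlim N (at_right 0) (locally (N 0)) /\
  (forall n, exists l : R, filterlim (Derive_n N n) (at_right 0) (locally l)).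

Definition nonlinearity (N : R -> R) : Prop :=
  smooth_on_nonneg N /\
  (forall s, 0 < s -> Derive N s < 0) /\
  N 0 = 1 /\ N 1 = 0 /\
  (exists l : Rbar, is_lim N p_infty l /\ Rbar_lt l 0) /\
  0 < - Derive N 1.

Definition Wpot (N r0 : R -> R) (x : R) : R :=
  N (r0 x ^ 2) + Derive N (r0 x ^ 2) * r0 x ^ 2.

Definition Vpot (N r0 : R -> R) (x : R) : R :=
  Derive (Wpot N r0) x + (Wpot N r0 x) ^ 2.

Definition L2C (f : R -> C) : Prop :=
  ex_RInt_gen (fun x => Cmod (f x) ^ 2) (Rbar_locally m_infty) (Rbar_locally p_infty).

Definition eigenpair (N r0 : R -> R) (E : C) (phi : R -> C) : Prop :=
  L2C phi /\ (exists x, phi x <> 0%C) /\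
  exists dphi : R -> C,
    forall x, is_derive phi x (dphi x) /\
              is_derive dphi x ((RtoC (Vpot N r0 x) - E) * phi x)%C.

From Stdlib Require Import Reals Lra Classical.
From Coquelicot Require Import Coquelicot.
Open Scope R_scope.

(* The system is the factorization of the Schroedinger operator: with [W = N_0 + N_p] and
   [A = d/dx - W] one has [-d^2/dx^2 + Vpot = A^* A].  Differentiating the equation for [U]
   and inserting the one for [V] gives [U'' = (Vpot + lam^2) U], while [Re (conj U V)] has
   derivative [Re lam (|U|^2 + |V|^2)]; as [U] and [V] are square integrable this forces
   [Re lam = 0], so [E = - lam^2 = (Im lam)^2] is real.  The ground state
   [phi_0 = r_0 sqrt (N (r_0^2))] solves [A phi_0 = 0] and is square integrable because
   [phi_0^2 = (r_0^2)' / 2]; for any eigenfunction an integration by parts gives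
   [E ||phi||^2 = ||A phi||^2 >= 0].  A Gronwall argument keeps [r_0^2] inside [(0, 1)], where
   [N] and its derivatives are bounded.  Since eigenfunctions are only known to be in [L^2],
   each integration by parts is replaced by a monotonicity argument between points near [-oo]
   and [+oo] where [|phi|^2 + |phi'|^2] is small. *)

Lemma is_derive_eq (f : R -> R) (x l l' : R) : is_derive f x l -> l = l' -> is_derive f x l'.
Proof. now intros H <-. Qed.

Lemma is_derive_Ceq (f : R -> C) (x : R) (l l' : C) : is_derive f x l -> l = l' -> is_derive f x l'.
Proof. now intros H <-. Qed.

Lemma is_derive_Rplus (f g : R -> R) x df dg :
  is_derive f x df -> is_derive g x dg -> is_derive (fun t => f t + g t) x (df + dg).
Proof. exact (is_derive_plus (K := R_AbsRing) f g x df dg). Qed.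

Lemma is_derive_Rminus (f g : R -> R) x df dg :
  is_derive f x df -> is_derive g x dg -> is_derive (fun t => f t - g t) x (df - dg).
Proof. exact (is_derive_minus (K := R_AbsRing) f g x df dg). Qed.

Lemma is_derive_Ropp (f : R -> R) x df :
  is_derive f x df -> is_derive (fun t => - f t) x (- df).
Proof. exact (is_derive_opp (K := R_AbsRing) f x df). Qed.

Lemma is_derive_Rmult (f g : R -> R) x df dg :
  is_derive f x df -> is_derive g x dg ->
  is_derive (fun t => f t * g t) x (df * g x + f x * dg).
Proof. intros Hf Hg. apply (is_derive_mult (K := R_AbsRing)); auto. apply Rmult_comm. Qed.

Lemma is_derive_Rsqr (f : R -> R) x df :
  is_derive f x df -> is_derive (fun t => f t ^ 2) x (2 * f x * df).
Proof. intros H. eapply is_derive_eq. apply (is_derive_pow f 2 x df H). simpl. ring. Qed.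

Lemma is_derive_Rconst (c x : R) : is_derive (fun _ => c) x 0.
Proof. exact (is_derive_const (K := R_AbsRing) c x). Qed.

Lemma is_derive_linear (k x : R) : is_derive (fun t => k * t) x k.
Proof.
  eapply is_derive_eq; [apply is_derive_scal, (is_derive_id (K := R_AbsRing)) | apply Rmult_1_r].
Qed.

Lemma is_derive_Rcomp (f g : R -> R) x df dg :
  is_derive f (g x) df -> is_derive g x dg -> is_derive (fun t => f (g t)) x (df * dg).
Proof.
  intros Hf Hg. eapply is_derive_eq. apply (is_derive_comp f g x df dg Hf Hg).
  apply Rmult_comm.
Qed.

Lemma is_derive_exp_scal (k x : R) : is_derive (fun t => exp (k * t)) x (k * exp (k * x)).
Proof.
  eapply is_derive_eq.
  - apply (is_derive_Rcomp exp (fun t => k * t)); [apply is_derive_exp | apply is_derive_linear].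
  - apply Rmult_comm.
Qed.

Lemma is_derive_reflect {V : NormedModule R_AbsRing} (f : R -> V) x l :
  is_derive f (- x) l -> is_derive (fun t => f (- t)) x (opp l).
Proof.
  intros H.
  replace (opp l) with (scal (opp (one : R_AbsRing)) l)
    by exact (scal_opp_one (V := NormedModule.ModuleSpace R_AbsRing V) l).
  apply (is_derive_comp f Ropp x l (opp one) H).
  apply (is_derive_Ropp (fun t => t) x 1), (is_derive_id (K := R_AbsRing)).
Qed.

Lemma is_derive_continuous (f : R -> R) x l : is_derive f x l -> continuous f x.
Proof.
  intros H. apply (ex_derive_continuous (K := R_AbsRing) (V := R_NormedModule)). now exists l.
Qed.

Lemma le_of_derive_nonneg (f df : R -> R) a b : a <= b ->
  (forall x, a <= x <= b -> is_derive f x (df x)) ->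
  (forall x, a <= x <= b -> 0 <= df x) -> f a <= f b.
Proof.
  intros Hab Hd Hp.
  destruct (MVT_gen f a b df) as [c [Hc Heq]];
    rewrite ?Rmin_left, ?Rmax_right in * by lra.
  - intros x Hx. apply Hd. lra.
  - intros x Hx. apply continuity_pt_filterlim, (is_derive_continuous _ _ (df x)), Hd, Hx.
  - pose proof (Rmult_le_pos (df c) (b - a) (Hp c Hc) ltac:(lra)). lra.
Qed.

Lemma increment_le_of_derive_le (f df g dg : R -> R) a b : a <= b ->
  (forall x, a <= x <= b -> is_derive f x (df x)) ->
  (forall x, a <= x <= b -> is_derive g x (dg x)) ->
  (forall x, a <= x <= b -> df x <= dg x) -> f b - f a <= g b - g a.
Proof.
  intros Hab Hf Hg Hle.
  enough (g a - f a <= g b - f b) by lra.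
  apply (le_of_derive_nonneg (fun x => g x - f x) (fun x => dg x - df x) a b Hab).
  - intros x Hx. apply is_derive_Rminus; auto.
  - intros x Hx. specialize (Hle x Hx). lra.
Qed.

Lemma nondecreasing_of_derive_nonneg (f df : R -> R) :
  (forall x, is_derive f x (df x)) -> (forall x, 0 <= df x) ->
  forall a b, a <= b -> f a <= f b.
Proof. intros Hd Hp a b Hab. apply (le_of_derive_nonneg f df); auto. Qed.

Lemma constant_of_derive_zero (f : R -> R) :
  (forall x, is_derive f x 0) -> forall x y, f x = f y.
Proof.
  intros H x y.
  assert (Hmono : forall a b, a <= b -> f a = f b).
  { intros a b Hab.
    pose proof (nondecreasing_of_derive_nonneg f (fun _ => 0) H (fun _ => Rle_refl 0) a b Hab).
    pose proof (nondecreasing_of_derive_nonneg (fun t => - f t) (fun _ => - 0)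
                  (fun t => is_derive_Ropp f t 0 (H t)) (fun _ => Req_le _ _ (eq_sym Ropp_0))
                  a b Hab).
    lra. }
  destruct (Rle_dec x y); [|symmetry]; apply Hmono; lra.
Qed.

Lemma exists_primitive (f : R -> R) : (forall x, continuous f x) ->
  exists S, (forall x, is_derive S x (f x)) /\ (forall a b, S b - S a = RInt f a b).
Proof.
  intros Hc.
  assert (Hex : forall a b, ex_RInt f a b)
    by (intros; apply (ex_RInt_continuous (V := R_CompleteNormedModule)); auto).
  exists (fun x => RInt f 0 x). split.
  - intros x. apply (is_derive_RInt f _ 0 x); auto.
    exists (mkposreal 1 Rlt_0_1). intros y _.
    apply (RInt_correct (V := R_CompleteNormedModule)), Hex.
  - intros a b. rewrite <- (RInt_Chasles f 0 a b (Hex 0 a) (Hex a b)). unfold plus; simpl. ring.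
Qed.

Lemma Rabs_le_inv a b : Rabs a <= b -> - b <= a <= b.
Proof.
  intros H. pose proof (Rle_abs a). pose proof (Rle_abs (- a)). rewrite Rabs_Ropp in *. lra.
Qed.

Lemma Rabs_mult_le a b A B : Rabs a <= A -> Rabs b <= B -> Rabs (a * b) <= A * B.
Proof. intros Ha Hb. rewrite Rabs_mult. apply Rmult_le_compat; auto; apply Rabs_pos. Qed.

Lemma continuous_R_eps (f : R -> R) x : continuous f x ->
  forall eps, 0 < eps -> exists d, 0 < d /\ forall y, Rabs (y - x) < d -> Rabs (f y - f x) < eps.
Proof.
  intros Hc eps Heps.
  destruct (proj1 (filterlim_locally f (f x)) Hc (mkposreal eps Heps)) as [d Hd].
  exists d. split; [apply cond_pos|]. intros y Hy. apply Hd, Hy.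
Qed.

Lemma first_zero (f : R -> R) a b : (forall x, continuous f x) -> a <= b -> 0 < f a -> f b <= 0 ->
  exists c, a < c <= b /\ f c = 0 /\ forall t, a <= t < c -> 0 < f t.
Proof.
  intros Hc Hab Ha Hb.
  set (E := fun t => a <= t <= b /\ forall y, a <= y <= t -> 0 < f y).
  assert (HEa : E a) by (split; [lra | intros y Hy; replace y with a by lra; exact Ha]).
  destruct (completeness E) as [c [Hub Hlub]].
  { exists b. intros t [Ht _]. lra. }
  { now exists a. }
  assert (Hac : a <= c) by (apply Hub, HEa).
  assert (Hcb : c <= b) by (apply Hlub; intros t [Ht _]; lra).
  assert (Hbelow : forall t, a <= t < c -> 0 < f t).
  { intros t Ht. apply NNPP. intros Hn.
    enough (c <= t) by lra.
    apply Hlub. intros e [He1 He2]. apply Rnot_lt_le. intros Hte. apply Hn, He2. lra. }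
  assert (Hfc : f c = 0).
  { destruct (Rtotal_order (f c) 0) as [Hlt | [Heq | Hgt]]; auto; exfalso.
    - destruct (Req_dec c a) as [-> | Hca]; [lra|].
      destruct (continuous_R_eps f c (Hc c) (- f c)) as [d [Hd Hfd]]; [lra|].
      set (t := Rmax a (c - d / 2)).
      assert (Ht : a <= t < c) by (split; [apply Rmax_l | apply Rmax_lub_lt; lra]).
      assert (Htc : Rabs (t - c) < d)
        by (pose proof (Rmax_r a (c - d / 2)) as Hm; fold t in Hm; apply Rabs_def1; lra).
      specialize (Hfd t Htc). apply Rabs_def2 in Hfd. specialize (Hbelow t Ht). lra.
    - destruct (Req_dec c b) as [-> | Hcb']; [lra|].
      destruct (continuous_R_eps f c (Hc c) (f c) Hgt) as [d [Hd Hfd]].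
      set (t := Rmin (c + d / 2) b).
      assert (Hct : c < t) by (apply Rmin_glb_lt; lra).
      enough (HEt : E t) by (specialize (Hub t HEt); lra).
      split; [split; [lra | apply Rmin_r]|].
      intros y Hy. destruct (Rlt_dec y c); [apply Hbelow; lra|].
      pose proof (Rmin_l (c + d / 2) b) as Hm. fold t in Hm.
      assert (Hyc : Rabs (y - c) < d) by (apply Rabs_def1; lra).
      specialize (Hfd y Hyc). apply Rabs_def2 in Hfd. lra. }
  exists c. split; [|split]; auto.
  destruct (Req_dec a c) as [<- | ]; lra.
Qed.

Lemma positive_right_of_log_derive_bounded (m dm : R -> R) K :
  (forall x, is_derive m x (dm x)) -> 0 < m 0 ->
  (forall x, 0 <= m x -> Rabs (dm x) <= K * m x) -> forall x, 0 <= x -> 0 < m x.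
Proof.
  intros Hd H0 HK x1 Hx1. apply Rnot_le_lt. intros Hle.
  destruct (first_zero m 0 x1) as [c [Hc [Hmc Hpos]]]; auto.
  { intros x. apply (is_derive_continuous _ _ _ (Hd x)). }
  (* Gronwall: [m t * exp (K t)] does not decrease as long as [m >= 0]. *)
  assert (Hmono : m 0 * exp (K * 0) <= m c * exp (K * c)).
  { apply (le_of_derive_nonneg (fun t => m t * exp (K * t))
             (fun t => dm t * exp (K * t) + m t * (K * exp (K * t)))); [lra| |].
    - intros t _.
      apply (is_derive_Rmult m (fun t => exp (K * t))); [apply Hd | apply is_derive_exp_scal].
    - intros t Ht.
      assert (Hmt : 0 <= m t)
        by (destruct (Req_dec t c) as [-> | ]; [lra | apply Rlt_le, Hpos; lra]).
      pose proof (HK t Hmt). pose proof (Rle_abs (- dm t)). rewrite Rabs_Ropp in *.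
      replace (dm t * exp (K * t) + m t * (K * exp (K * t))) with ((dm t + K * m t) * exp (K * t))
        by ring.
      apply Rmult_le_pos; [lra | apply Rlt_le, exp_pos]. }
  rewrite Hmc, Rmult_0_r, exp_0 in Hmono. lra.
Qed.

Lemma positive_of_log_derive_bounded (m dm : R -> R) K :
  (forall x, is_derive m x (dm x)) -> 0 < m 0 ->
  (forall x, 0 <= m x -> Rabs (dm x) <= K * m x) -> forall x, 0 < m x.
Proof.
  intros Hd H0 HK x.
  destruct (Rle_dec 0 x); [now apply (positive_right_of_log_derive_bounded m dm K)|].
  replace x with (- - x) by ring.
  apply (positive_right_of_log_derive_bounded (fun t => m (- t)) (fun t => - dm (- t)) K).
  - intros t. apply (is_derive_reflect m), Hd.
  - now rewrite Ropp_0.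
  - intros t Ht. rewrite Rabs_Ropp. now apply HK.
  - lra.
Qed.

Lemma nondecreasing_bounded_lim_p_infty (f : R -> R) B :
  (forall x y, x <= y -> f x <= f y) -> (forall x, f x <= B) ->
  exists l, filterlim f (Rbar_locally p_infty) (locally l).
Proof.
  intros Hm HB.
  set (E := fun y => exists x, y = f x).
  destruct (completeness E) as [l [Hub Hlub]].
  { exists B. intros y [x ->]. apply HB. }
  { now exists (f 0), 0. }
  exists l. apply filterlim_locally. intros eps.
  assert (Hx0 : exists x0, l - eps < f x0).
  { apply NNPP. intros Hn.
    enough (l <= l - eps) by (pose proof (cond_pos eps); lra).
    apply Hlub. intros y [x ->]. apply Rnot_lt_le. intros Hlt. apply Hn. now exists x. }
  destruct Hx0 as [x0 Hx0]. exists x0. intros x Hx. change (Rabs (f x - l) < eps).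
  assert (f x <= l) by (apply Hub; now exists x).
  pose proof (Hm x0 x (Rlt_le _ _ Hx)). pose proof (cond_pos eps).
  apply Rabs_def1; lra.
Qed.

Lemma nondecreasing_bounded_lim_m_infty (f : R -> R) B :
  (forall x y, x <= y -> f x <= f y) -> (forall x, B <= f x) ->
  exists l, filterlim f (Rbar_locally m_infty) (locally l).
Proof.
  intros Hm HB.
  destruct (nondecreasing_bounded_lim_p_infty (fun t => - f (- t)) (- B)) as [l Hl].
  { intros x y Hxy. pose proof (Hm (- y) (- x) ltac:(lra)). lra. }
  { intros x. pose proof (HB (- x)). lra. }
  exists (- l).
  apply (filterlim_ext (fun t => - (- f (- - t)))); [intros t; now rewrite !Ropp_involutive|].
  apply (filterlim_comp _ _ _ (fun t => - f (- - t)) Ropp _ (locally l)).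
  - apply (filterlim_comp _ _ _ Ropp (fun s => - f (- s)) _ (Rbar_locally p_infty)); [|exact Hl].
    exact (filterlim_Rbar_opp m_infty).
  - exact (filterlim_opp (K := R_AbsRing) l).
Qed.

Lemma ex_RInt_gen_of_bounded_increasing_primitive (F f : R -> R) A B :
  (forall x, is_derive F x (f x)) -> (forall x, continuous f x) -> (forall x, 0 <= f x) ->
  (forall x, A <= F x <= B) -> ex_RInt_gen f (Rbar_locally m_infty) (Rbar_locally p_infty).
Proof.
  intros Hd Hc Hp HAB.
  pose proof (nondecreasing_of_derive_nonneg F f Hd Hp) as Hmono.
  destruct (nondecreasing_bounded_lim_p_infty F B Hmono) as [lb Hlb]; [intros x; apply HAB|].
  destruct (nondecreasing_bounded_lim_m_infty F A Hmono) as [la Hla]; [intros x; apply HAB|].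
  assert (HD : forall x, Derive F x = f x) by (intros x; apply is_derive_unique, Hd).
  assert (Htriv : forall P : R * R -> Prop, (forall ab, P ab) ->
            filter_prod (Rbar_locally m_infty) (Rbar_locally p_infty) P).
  { intros P HP.
    apply (Filter_prod _ _ P (fun _ => True) (fun _ => True)); auto; apply filter_true. }
  exists (lb - la).
  apply (is_RInt_gen_ext (Derive F)); [apply Htriv; intros ab x _; apply HD|].
  apply is_RInt_gen_Derive; auto; apply Htriv; intros ab x _.
  - now exists (f x).
  - apply (continuous_ext f); [intros t; symmetry; apply HD | apply Hc].
Qed.

Lemma bounded_on_0_1_of_lim_at_right_0 (f : R -> R) l :
  (forall x, 0 < x -> continuous f x) -> filterlim f (at_right 0) (locally l) ->
  exists M, forall x, 0 < x <= 1 -> Rabs (f x) <= M.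
Proof.
  intros Hc Hl.
  destruct (proj1 (filterlim_locally f l) Hl (mkposreal 1 Rlt_0_1)) as [d Hd].
  set (d' := Rmin (d / 2) 1).
  assert (Hd' : 0 < d' <= 1 /\ d' < d).
  { unfold d'. pose proof (cond_pos d).
    pose proof (Rmin_l (d / 2) 1). pose proof (Rmin_r (d / 2) 1).
    assert (0 < Rmin (d / 2) 1) by (apply Rmin_glb_lt; lra). lra. }
  assert (Hcont : forall c, d' <= c <= 1 -> continuity_pt f c).
  { intros c Hc'. apply continuity_pt_filterlim, Hc. lra. }
  destruct (continuity_ab_maj f d' 1 (proj2 (proj1 Hd')) Hcont) as [xM [HxM _]].
  destruct (continuity_ab_min f d' 1 (proj2 (proj1 Hd')) Hcont) as [xm [Hxm _]].
  exists (Rmax (Rabs l + 1) (Rmax (Rabs (f xm)) (Rabs (f xM)))).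
  intros x Hx. destruct (Rlt_dec x d') as [Hlt | Hge].
  - assert (Hb : ball 0 d x) by (change (Rabs (x - 0) < d); apply Rabs_def1; lra).
    specialize (Hd x Hb (proj1 Hx)). change (Rabs (f x - l) < 1) in Hd.
    eapply Rle_trans; [|apply Rmax_l].
    replace (f x) with ((f x - l) + l) by ring.
    pose proof (Rabs_triang (f x - l) l). lra.
  - eapply Rle_trans; [|apply Rmax_r].
    apply RmaxAbs; [apply Hxm | apply HxM]; lra.
Qed.

(** * Functions with a bounded primitive *)

Definition has_bounded_primitive (f : R -> R) : Prop :=
  exists S L, (forall x, is_derive S x (f x)) /\ (forall a b, a <= b -> S b - S a <= L).

Definition small_at_infinities (g : R -> R) : Prop :=
  forall eps, 0 < eps -> forall X,
    (exists x, X <= x /\ g x < eps) /\ (exists x, x <= X /\ g x < eps).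

Lemma has_bounded_primitive_reflect (f : R -> R) :
  has_bounded_primitive f -> has_bounded_primitive (fun t => f (- t)).
Proof.
  intros [S [L [HS HL]]]. exists (fun t => - S (- t)), L. split.
  - intros x. eapply is_derive_eq.
    + apply is_derive_Ropp, (is_derive_reflect S), HS.
    + apply Ropp_involutive.
  - intros a b Hab. specialize (HL (- b) (- a) ltac:(lra)). lra.
Qed.

Lemma has_bounded_primitive_plus (f g : R -> R) :
  has_bounded_primitive f -> has_bounded_primitive g -> has_bounded_primitive (fun t => f t + g t).
Proof.
  intros [S [L [HS HL]]] [T [M [HT HM]]]. exists (fun t => S t + T t), (L + M). split.
  - intros x. apply is_derive_Rplus; auto.
  - intros a b Hab. specialize (HL a b Hab). specialize (HM a b Hab). lra.
Qed.

Lemma exists_small_right (f : R -> R) : has_bounded_primitive f ->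
  forall eps, 0 < eps -> forall X, exists x, X <= x /\ f x < eps.
Proof.
  intros [S [L [HS HL]]] eps Heps X. apply NNPP. intros Hn.
  assert (Hge : forall x, X <= x -> eps <= f x).
  { intros x Hx. apply Rnot_lt_le. intros Hlt. apply Hn. now exists x. }
  set (T := (Rabs L + 1) / eps).
  assert (HT : 0 < T) by (apply Rdiv_lt_0_compat; [pose proof (Rabs_pos L)|]; lra).
  assert (Hinc : eps * (X + T) - eps * X <= S (X + T) - S X).
  { apply (increment_le_of_derive_le (fun t => eps * t) (fun _ => eps) S f); [lra| | |].
    - intros t _. apply is_derive_linear.
    - intros t _. apply HS.
    - intros t Ht. apply Hge. lra. }
  assert (Heq : eps * (X + T) - eps * X = Rabs L + 1) by (unfold T; field; lra).
  pose proof (HL X (X + T) ltac:(lra)). pose proof (Rle_abs L). lra.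
Qed.

Lemma small_at_infinities_of_bounded_primitive (f : R -> R) :
  has_bounded_primitive f -> small_at_infinities f.
Proof.
  intros Hf eps Heps X. split.
  - now apply exists_small_right.
  - destruct (exists_small_right _ (has_bounded_primitive_reflect f Hf) eps Heps (- X))
      as [x [Hx Hfx]].
    exists (- x). split; [lra | exact Hfx].
Qed.

Lemma primitive_gap (S f : R -> R) x0 :
  (forall x, is_derive S x (f x)) -> (forall x, 0 <= f x) -> continuous f x0 -> 0 < f x0 ->
  exists a b d, a < b /\ 0 < d /\ forall y x, y <= a -> b <= x -> d <= S x - S y.
Proof.
  intros HS Hf Hc Hp.
  destruct (continuous_R_eps f x0 Hc (f x0 / 2)) as [e [He Hd]]; [lra|].
  exists (x0 - e / 2), (x0 + e / 2), (f x0 / 2 * e).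
  split; [lra | split; [apply Rmult_lt_0_compat; lra|]].
  intros y x Hy Hx.
  assert (Hmid : f x0 / 2 * (x0 + e / 2) - f x0 / 2 * (x0 - e / 2)
                 <= S (x0 + e / 2) - S (x0 - e / 2)).
  { apply (increment_le_of_derive_le (fun t => f x0 / 2 * t) (fun _ => f x0 / 2) S f); [lra| | |].
    - intros t _. apply is_derive_linear.
    - intros t _. apply HS.
    - intros t Ht. assert (Hte : Rabs (t - x0) < e) by (apply Rabs_def1; lra).
      specialize (Hd t Hte). apply Rabs_def2 in Hd. lra. }
  pose proof (nondecreasing_of_derive_nonneg S f HS Hf y (x0 - e / 2) Hy).
  pose proof (nondecreasing_of_derive_nonneg S f HS Hf (x0 + e / 2) x Hx).
  nra.
Qed.

(* For [c < 0], [Q] would drop by a fixed amount across the bump of [f], which is impossible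
   since it takes arbitrarily small values far out on both sides. *)
Lemma rate_nonneg_of_small_at_infinities (S f g Q dQ : R -> R) x0 C c :
  (forall x, is_derive S x (f x)) -> (forall x, 0 <= f x) -> continuous f x0 -> 0 < f x0 ->
  small_at_infinities g -> 0 <= C -> (forall x, Rabs (Q x) <= C * g x) ->
  (forall x, is_derive Q x (dQ x)) -> (forall x, dQ x <= c * f x) -> 0 <= c.
Proof.
  intros HS Hf Hc Hp Hg HC HQ HdQ Hle.
  apply Rnot_lt_le. intros Hneg.
  destruct (primitive_gap S f x0 HS Hf Hc Hp) as [a [b [d [Hab [Hd Hgap]]]]].
  set (eps := - c * d / (2 * (C + 1))).
  assert (Heps : 0 < eps) by (unfold eps; apply Rdiv_lt_0_compat; nra).
  destruct (Hg eps Heps b) as [[x [Hx Hgx]] _].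
  destruct (Hg eps Heps a) as [_ [y [Hy Hgy]]].
  assert (Hdrop : Q x - Q y <= c * S x - c * S y).
  { apply (increment_le_of_derive_le Q dQ (fun t => c * S t) (fun t => c * f t)); [lra| | |].
    - intros t _. apply HdQ.
    - intros t _. apply is_derive_scal, HS.
    - intros t _. apply Hle. }
  pose proof (Hgap y x Hy Hx).
  pose proof (HQ x) as HQx. pose proof (HQ y) as HQy.
  apply Rabs_le_inv in HQx. apply Rabs_le_inv in HQy.
  assert (C * g x <= C * eps) by (apply Rmult_le_compat_l; lra).
  assert (C * g y <= C * eps) by (apply Rmult_le_compat_l; lra).
  assert (2 * C * eps < - c * d).
  { unfold eps. apply (Rmult_lt_reg_r (C + 1)); [lra|]. field_simplify; nra. }
  nra.
Qed.

Lemma rate_zero_of_small_at_infinities (S f g Q : R -> R) x0 C c :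
  (forall x, is_derive S x (f x)) -> (forall x, 0 <= f x) -> continuous f x0 -> 0 < f x0 ->
  small_at_infinities g -> 0 <= C -> (forall x, Rabs (Q x) <= C * g x) ->
  (forall x, is_derive Q x (c * f x)) -> c = 0.
Proof.
  intros HS Hf Hc Hp Hg HC HQ HdQ.
  assert (0 <= c).
  { apply (rate_nonneg_of_small_at_infinities S f g Q (fun x => c * f x) x0 C c); auto.
    intros x. lra. }
  assert (0 <= - c).
  { apply (rate_nonneg_of_small_at_infinities S f g (fun t => - Q t) (fun x => - (c * f x)) x0 C);
      auto.
    - intros x. rewrite Rabs_Ropp. apply HQ.
    - intros x. apply is_derive_Ropp, HdQ.
    - intros x. lra. }
  lra.
Qed.

Lemma is_derive_Re (f : R -> C) x l : is_derive f x l -> is_derive (fun t => Re (f t)) x (Re l).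
Proof.
  intros H.
  exact (filterdiff_comp' (K := R_AbsRing) f (fun z : R_NormedModule * R_NormedModule => fst z)
           x _ _ H (filterdiff_linear _ is_linear_fst)).
Qed.

Lemma is_derive_Im (f : R -> C) x l : is_derive f x l -> is_derive (fun t => Im (f t)) x (Im l).
Proof.
  intros H.
  exact (filterdiff_comp' (K := R_AbsRing) f (fun z : R_NormedModule * R_NormedModule => snd z)
           x _ _ H (filterdiff_linear _ is_linear_snd)).
Qed.

Lemma is_derive_C (f : R -> C) x l :
  is_derive (fun t => Re (f t)) x (Re l) -> is_derive (fun t => Im (f t)) x (Im l) ->
  is_derive f x l.
Proof.
  intros H1 H2.
  assert (Hl : is_linear (fun z : R_NormedModule * R_NormedModule => (fst z, snd z))).
  { apply (is_linear_prod (K := R_AbsRing)); [apply is_linear_fst | apply is_linear_snd]. }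
  pose proof (filterdiff_comp'_2 (K := R_AbsRing) (fun t => Re (f t)) (fun t => Im (f t))
                (fun a b => (a, b)) x _ _ (fun a b => (a, b)) H1 H2 (filterdiff_linear _ Hl)) as H.
  eapply filterdiff_ext; [|eapply filterdiff_ext_lin; [exact H|]].
  - intros y. simpl. now destruct (f y).
  - intros y. now destruct l.
Qed.

Lemma is_derive_RtoC (f : R -> R) x l :
  is_derive f x l -> is_derive (fun t => RtoC (f t)) x (RtoC l).
Proof. intros H. apply is_derive_C; simpl; [exact H | apply is_derive_Rconst]. Qed.

Lemma is_derive_Cplus (f g : R -> C) x df dg :
  is_derive f x df -> is_derive g x dg -> is_derive (fun t => f t + g t)%C x (df + dg)%C.
Proof. exact (is_derive_plus f g x df dg). Qed.

Lemma is_derive_Copp (f : R -> C) x l : is_derive f x l -> is_derive (fun t => - f t)%C x (- l)%C.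
Proof. exact (is_derive_opp f x l). Qed.

Lemma is_derive_Cmult (f g : R -> C) x df dg :
  is_derive f x df -> is_derive g x dg ->
  is_derive (fun t => f t * g t)%C x (df * g x + f x * dg)%C.
Proof.
  intros Hf Hg.
  pose proof (is_derive_Re f x df Hf). pose proof (is_derive_Im f x df Hf).
  pose proof (is_derive_Re g x dg Hg). pose proof (is_derive_Im g x dg Hg).
  apply is_derive_C.
  - apply (is_derive_ext (fun t => Re (f t) * Re (g t) - Im (f t) * Im (g t))).
    { intros t. now destruct (f t), (g t). }
    eapply is_derive_eq; [apply is_derive_Rminus; apply is_derive_Rmult; eassumption|].
    destruct df, dg, (f x), (g x). simpl. ring.
  - apply (is_derive_ext (fun t => Re (f t) * Im (g t) + Im (f t) * Re (g t))).
    { intros t. now destruct (f t), (g t). }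
    eapply is_derive_eq; [apply is_derive_Rplus; apply is_derive_Rmult; eassumption|].
    destruct df, dg, (f x), (g x). simpl. ring.
Qed.

Lemma is_derive_Cconj (f : R -> C) x l :
  is_derive f x l -> is_derive (fun t => Cconj (f t)) x (Cconj l).
Proof.
  intros H. apply is_derive_C.
  - exact (is_derive_Re f x l H).
  - apply is_derive_Ropp. exact (is_derive_Im f x l H).
Qed.

Lemma is_derive_Cconj_mult (f g : R -> C) x df dg :
  is_derive f x df -> is_derive g x dg ->
  is_derive (fun t => Cconj (f t) * g t)%C x (Cconj df * g x + Cconj (f x) * dg)%C.
Proof.
  intros Hf Hg. apply (is_derive_Cmult (fun t => Cconj (f t))); auto. now apply is_derive_Cconj.
Qed.

Lemma is_derive_Cmod2 (f : R -> C) x l :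
  is_derive f x l -> is_derive (fun t => Cmod (f t) ^ 2) x (2 * Re (Cconj (f x) * l)).
Proof.
  intros H. apply (is_derive_ext (fun t => Re (f t) ^ 2 + Im (f t) ^ 2)).
  { intros t. now rewrite Cmod2_alt. }
  eapply is_derive_eq.
  - apply is_derive_Rplus; apply is_derive_Rsqr; [apply (is_derive_Re f) | apply (is_derive_Im f)];
      exact H.
  - destruct l, (f x). simpl. ring.
Qed.

Lemma is_derive_Cconst (c : C) (x : R) : is_derive (fun _ : R => c) x (RtoC 0).
Proof. exact (is_derive_const (K := R_AbsRing) c x). Qed.

Lemma Cmod2_pos (z : C) : z <> 0%C -> 0 < Cmod z ^ 2.
Proof. intros Hz. apply pow_lt, Cmod_gt_0, Hz. Qed.

Lemma Re_Cconj_mult_bound (z w : C) : Rabs (Re (Cconj z * w)) <= Cmod z ^ 2 + Cmod w ^ 2.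
Proof.
  rewrite !Cmod2_alt. destruct z as [p q], w as [u v]. simpl. apply Rabs_le.
  pose proof (pow2_ge_0 (p - u)). pose proof (pow2_ge_0 (p + u)).
  pose proof (pow2_ge_0 (q - v)). pose proof (pow2_ge_0 (q + v)). split; nra.
Qed.

Lemma Im_Cconj_mult_bound (z w : C) : Rabs (Im (Cconj z * w)) <= Cmod z ^ 2 + Cmod w ^ 2.
Proof.
  rewrite !Cmod2_alt. destruct z as [p q], w as [u v]. simpl. apply Rabs_le.
  pose proof (pow2_ge_0 (p - v)). pose proof (pow2_ge_0 (p + v)).
  pose proof (pow2_ge_0 (q - u)). pose proof (pow2_ge_0 (q + u)). split; nra.
Qed.

Lemma has_bounded_primitive_of_ex_RInt_gen (f : R -> R) :
  (forall x, continuous f x) -> (forall x, 0 <= f x) ->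
  ex_RInt_gen f (Rbar_locally m_infty) (Rbar_locally p_infty) -> has_bounded_primitive f.
Proof.
  intros Hc Hp [l Hl].
  destruct (exists_primitive f Hc) as [S [HS HSI]].
  destruct (Hl _ (locally_ball l (mkposreal 1 Rlt_0_1))) as [Q R0 [M1 HQ] [M2 HR] Himp].
  exists S, (l + 1). split; auto.
  intros a b Hab. rewrite HSI.
  set (a' := Rmin a (M1 - 1)). set (b' := Rmax b (M2 + 1)).
  destruct (Himp a' b') as [y [Hy Hb]].
  { apply HQ. pose proof (Rmin_r a (M1 - 1)). unfold a'. lra. }
  { apply HR. pose proof (Rmax_r b (M2 + 1)). unfold b'. lra. }
  change (Rabs (y - l) < 1) in Hb.
  apply (is_RInt_unique (V := R_CompleteNormedModule)) in Hy. simpl in Hy.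
  assert (Hex : forall u v, ex_RInt f u v)
    by (intros; apply (ex_RInt_continuous (V := R_CompleteNormedModule)); auto).
  assert (Ha' : a' <= a) by apply Rmin_l.
  assert (Hb' : b <= b') by apply Rmax_l.
  rewrite <- (RInt_Chasles f a' b b' (Hex _ _) (Hex _ _)) in Hy.
  rewrite <- (RInt_Chasles f a' a b (Hex _ _) (Hex _ _)) in Hy.
  pose proof (RInt_ge_0 f a' a Ha' (Hex _ _) (fun x _ => Hp x)).
  pose proof (RInt_ge_0 f b b' Hb' (Hex _ _) (fun x _ => Hp x)).
  apply Rabs_def2 in Hb. unfold plus in Hy; simpl in Hy. lra.
Qed.

Lemma has_bounded_primitive_of_L2C (phi dphi : R -> C) :
  L2C phi -> (forall x, is_derive phi x (dphi x)) ->
  has_bounded_primitive (fun t => Cmod (phi t) ^ 2).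
Proof.
  intros HL Hd. apply has_bounded_primitive_of_ex_RInt_gen; auto.
  - intros x. eapply is_derive_continuous, is_derive_Cmod2, Hd.
  - intros x. apply pow2_ge_0.
Qed.

(* [K = Re (conj phi phi')] has [K' = |phi'|^2 + Re a |phi|^2 >= P' - M |phi|^2], so if [P]
   grew too much then [K >= 1] from some point on, and [|phi|^2], whose derivative is [2 K],
   would grow linearly. *)
Lemma Cmod2_deriv_primitive_bounded_right (phi dphi a : R -> C) (P : R -> R) M :
  (forall x, is_derive phi x (dphi x)) -> (forall x, is_derive dphi x (a x * phi x)%C) ->
  (forall x, Rabs (Re (a x)) <= M) -> has_bounded_primitive (fun t => Cmod (phi t) ^ 2) ->
  (forall x, is_derive P x (Cmod (dphi x) ^ 2)) -> exists B, forall b, 0 <= b -> P b <= B.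
Proof.
  intros Hd Hdd Ha Hphi HP.
  pose proof Hphi as [S [L [HS HL]]].
  assert (HM : 0 <= M) by (pose proof (Rabs_pos (Re (a 0))); pose proof (Ha 0); lra).
  set (K := fun t => Re (Cconj (phi t) * dphi t)).
  assert (HK : forall x, is_derive K x (Cmod (dphi x) ^ 2 + Re (a x) * Cmod (phi x) ^ 2)).
  { intros x. eapply is_derive_eq.
    - apply (is_derive_Re (fun t => Cconj (phi t) * dphi t)%C), is_derive_Cconj_mult; auto.
    - rewrite !Cmod2_alt. destruct (dphi x), (phi x), (a x). simpl. ring. }
  exists (1 + M * Rabs L - (K 0 - P 0)).
  intros b Hb. apply Rnot_lt_le. intros Hgt.
  assert (HK1 : forall y, b <= y -> 1 <= K y).
  { intros y Hy.
    assert (Hdrift : - (M * S y) - - (M * S 0) <= (K y - P y) - (K 0 - P 0)).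
    { apply (increment_le_of_derive_le (fun t => - (M * S t)) (fun t => - (M * Cmod (phi t) ^ 2))
               (fun t => K t - P t) (fun t => Re (a t) * Cmod (phi t) ^ 2)); [lra| | |].
      - intros t _. apply is_derive_Ropp, is_derive_scal, HS.
      - intros t _. eapply is_derive_eq; [apply is_derive_Rminus; [apply HK | apply HP] | ring].
      - intros t _. pose proof (Rabs_le_inv _ _ (Ha t)). pose proof (pow2_ge_0 (Cmod (phi t))).
        nra. }
    pose proof (HL 0 y ltac:(lra)). pose proof (Rle_abs L).
    pose proof (nondecreasing_of_derive_nonneg P _ HP (fun x => pow2_ge_0 _) b y Hy).
    assert (M * (S y - S 0) <= M * Rabs L) by (apply Rmult_le_compat_l; lra).
    lra. }
  destruct (exists_small_right _ Hphi 1 Rlt_0_1 (b + 1)) as [y [Hy Hsmall]].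
  assert (Hgrow : 2 * y - 2 * b <= Cmod (phi y) ^ 2 - Cmod (phi b) ^ 2).
  { apply (increment_le_of_derive_le (fun t => 2 * t) (fun _ => 2) (fun t => Cmod (phi t) ^ 2)
             (fun t => 2 * K t)); [lra| | |].
    - intros t _. apply is_derive_linear.
    - intros t _. apply is_derive_Cmod2, Hd.
    - intros t Ht. specialize (HK1 t ltac:(lra)). lra. }
  pose proof (pow2_ge_0 (Cmod (phi b))). lra.
Qed.

Lemma has_bounded_primitive_Cmod2_deriv (phi dphi a : R -> C) M :
  (forall x, is_derive phi x (dphi x)) -> (forall x, is_derive dphi x (a x * phi x)%C) ->
  (forall x, Rabs (Re (a x)) <= M) -> has_bounded_primitive (fun t => Cmod (phi t) ^ 2) ->
  has_bounded_primitive (fun t => Cmod (dphi t) ^ 2).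
Proof.
  intros Hd Hdd Ha Hphi.
  destruct (exists_primitive (fun t => Cmod (dphi t) ^ 2)) as [P [HP _]].
  { intros x. eapply is_derive_continuous, is_derive_Cmod2, Hdd. }
  destruct (Cmod2_deriv_primitive_bounded_right phi dphi a P M) as [B1 HB1]; auto.
  destruct (Cmod2_deriv_primitive_bounded_right (fun t => phi (- t)) (fun t => - dphi (- t)%R)%C
              (fun t => a (- t)) (fun t => - P (- t)) M) as [B2 HB2].
  - intros x. apply (is_derive_reflect phi), Hd.
  - intros x. eapply is_derive_Ceq; [apply is_derive_Copp, (is_derive_reflect dphi), Hdd|].
    exact (opp_opp _).
  - intros x. apply Ha.
  - apply (has_bounded_primitive_reflect (fun t => Cmod (phi t) ^ 2)), Hphi.
  - intros x. eapply is_derive_eq; [apply is_derive_Ropp, (is_derive_reflect P), HP|].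
    rewrite Cmod_opp. apply Ropp_involutive.
  - exists P, (B1 + B2). split; auto.
    intros a0 b0 Hab.
    pose proof (HB1 (Rmax b0 0) (Rmax_r b0 0)).
    pose proof (HB2 (- Rmin a0 0) ltac:(pose proof (Rmin_r a0 0); lra)) as HB2'.
    rewrite Ropp_involutive in HB2'.
    pose proof (nondecreasing_of_derive_nonneg P _ HP (fun x => pow2_ge_0 _)) as HPmono.
    pose proof (HPmono b0 (Rmax b0 0) (Rmax_l b0 0)).
    pose proof (HPmono (Rmin a0 0) a0 (Rmin_l a0 0)).
    lra.
Qed.

(** * The factorized Schroedinger operator and the Dirac system *)

Section Factorized_Schroedinger_operator.

Variables (W dW Vp : R -> R) (Wm Vm : R).
Hypothesis HW : forall x, is_derive W x (dW x).
Hypothesis HVp : forall x, Vp x = dW x + W x ^ 2.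
Hypothesis HWm : forall x, Rabs (W x) <= Wm.
Hypothesis HVm : forall x, Rabs (Vp x) <= Vm.

(* [Im (conj phi phi')] has derivative [- Im E |phi|^2], and
   [W |phi|^2 - Re (conj phi phi')] has derivative [Re E |phi|^2 - |phi' - W phi|^2]. *)
Lemma eigenvalue_real_nonneg (E : C) (phi dphi : R -> C) x0 :
  L2C phi -> phi x0 <> 0%C -> (forall x, is_derive phi x (dphi x)) ->
  (forall x, is_derive dphi x ((RtoC (Vp x) - E) * phi x)%C) -> Im E = 0 /\ 0 <= Re E.
Proof.
  intros HL Hx0 Hd Hdd.
  set (F := fun t => Cmod (phi t) ^ 2).
  assert (HF : forall x, is_derive F x (2 * Re (Cconj (phi x) * dphi x)))
    by (intros x; apply is_derive_Cmod2, Hd).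
  pose proof (has_bounded_primitive_of_L2C phi dphi HL Hd) as Hphi.
  pose proof Hphi as [S [L [HS _]]].
  assert (Hdphi : has_bounded_primitive (fun t => Cmod (dphi t) ^ 2)).
  { apply (has_bounded_primitive_Cmod2_deriv phi dphi (fun x => RtoC (Vp x) - E)%C
             (Vm + Rabs (Re E))); auto.
    intros x. change (Rabs (Vp x - Re E) <= Vm + Rabs (Re E)).
    eapply Rle_trans; [apply Rabs_triang|]. rewrite Rabs_Ropp. pose proof (HVm x). lra. }
  set (g := fun t => F t + Cmod (dphi t) ^ 2).
  assert (Hg : small_at_infinities g)
    by (apply small_at_infinities_of_bounded_primitive, has_bounded_primitive_plus; auto).
  assert (HFnn : forall x, 0 <= F x) by (intros x; apply pow2_ge_0).
  assert (HFc : continuous F x0) by (eapply is_derive_continuous, HF).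
  assert (HF0 : 0 < F x0) by (apply Cmod2_pos, Hx0).
  split.
  - enough (- Im E = 0) by lra.
    apply (rate_zero_of_small_at_infinities S F g (fun t => Im (Cconj (phi t) * dphi t)) x0 1);
      auto; [lra | |].
    + intros x. rewrite Rmult_1_l. apply Im_Cconj_mult_bound.
    + intros x. eapply is_derive_eq.
      * apply (is_derive_Im (fun t => Cconj (phi t) * dphi t)%C), is_derive_Cconj_mult; auto.
      * unfold F. rewrite Cmod2_alt. destruct (phi x), (dphi x), E. simpl. ring.
  - assert (HWm0 : 0 <= Wm) by (pose proof (HWm 0); pose proof (Rabs_pos (W 0)); lra).
    apply (rate_nonneg_of_small_at_infinities S F g
             (fun t => W t * F t - Re (Cconj (phi t) * dphi t))
             (fun t => dW t * F t + W t * (2 * Re (Cconj (phi t) * dphi t))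
                       - Re (Cconj (dphi t) * dphi t + Cconj (phi t) * ((RtoC (Vp t) - E) * phi t)))
             x0 (Wm + 1)); auto; [lra | | |].
    + intros x. unfold g.
      pose proof (Re_Cconj_mult_bound (phi x) (dphi x)) as Hre.
      change (Cmod (phi x) ^ 2) with (F x) in Hre.
      assert (Rabs (W x * F x) <= Wm * F x)
        by (rewrite Rabs_mult, (Rabs_pos_eq (F x)); [apply Rmult_le_compat_r|]; auto).
      pose proof (Rabs_triang (W x * F x) (- Re (Cconj (phi x) * dphi x))).
      rewrite Rabs_Ropp in *.
      pose proof (Rmult_le_pos _ _ HWm0 (pow2_ge_0 (Cmod (dphi x)))). unfold Rminus. nra.
    + intros x. apply is_derive_Rminus.
      * apply is_derive_Rmult; auto.
      * apply (is_derive_Re (fun t => Cconj (phi t) * dphi t)%C), is_derive_Cconj_mult; auto.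
    + intros x. unfold F. rewrite HVp, !Cmod2_alt.
      destruct (phi x) as [p q], (dphi x) as [p1 q1], E. simpl.
      pose proof (pow2_ge_0 (p1 - W x * p)). pose proof (pow2_ge_0 (q1 - W x * q)). nra.
Qed.

End Factorized_Schroedinger_operator.

Section Dirac_system.

Variables (W : R -> R) (lam : C) (U V : R -> C).
Hypothesis HU : forall x, is_derive U x (RtoC (W x) * U x + lam * V x)%C.
Hypothesis HV : forall x, is_derive V x (lam * U x - RtoC (W x) * V x)%C.

(* [Re (conj U V)] has derivative [Re lam (|U|^2 + |V|^2)] and is bounded by [|U|^2 + |V|^2]. *)
Lemma dirac_Re_lambda : L2C U -> L2C V -> (exists x, U x <> 0%C \/ V x <> 0%C) -> Re lam = 0.
Proof.
  intros HLU HLV [x0 Hx0].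
  set (f := fun t => Cmod (U t) ^ 2 + Cmod (V t) ^ 2).
  assert (Hfc : continuous f x0)
    by (eapply is_derive_continuous, is_derive_Rplus; apply is_derive_Cmod2; [apply HU | apply HV]).
  assert (Hf : has_bounded_primitive f)
    by (apply has_bounded_primitive_plus; [exact (has_bounded_primitive_of_L2C U _ HLU HU)
                                           | exact (has_bounded_primitive_of_L2C V _ HLV HV)]).
  pose proof Hf as [S [L [HS _]]].
  apply (rate_zero_of_small_at_infinities S f f (fun t => Re (Cconj (U t) * V t)) x0 1); auto.
  - intros x. unfold f. pose proof (pow2_ge_0 (Cmod (U x))). pose proof (pow2_ge_0 (Cmod (V x))).
    lra.
  - unfold f. pose proof (pow2_ge_0 (Cmod (U x0))). pose proof (pow2_ge_0 (Cmod (V x0))).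
    destruct Hx0 as [Hx0 | Hx0]; pose proof (Cmod2_pos _ Hx0); lra.
  - now apply small_at_infinities_of_bounded_primitive.
  - lra.
  - intros x. rewrite Rmult_1_l. apply Re_Cconj_mult_bound.
  - intros x. eapply is_derive_eq.
    + apply (is_derive_Re (fun t => Cconj (U t) * V t)%C), is_derive_Cconj_mult; auto.
    + unfold f. rewrite !Cmod2_alt. destruct (U x), (V x), lam. simpl. ring.
Qed.

(* If [U] vanished, [V' = - W V] would make [|V|^2 phi0^2] constant, so [|V|] would be bounded
   below. *)
Lemma dirac_U_nonzero (phi0 : R -> R) M :
  (forall x, is_derive phi0 x (W x * phi0 x)) -> (forall x, 0 < phi0 x ^ 2 <= M) ->
  L2C V -> (exists x, U x <> 0%C \/ V x <> 0%C) -> exists x, U x <> 0%C.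
Proof.
  intros Hphi0 Hb HLV [x0 Hx0]. apply NNPP. intros Hn.
  assert (HU0 : forall x, U x = 0%C) by (intros x; apply NNPP; intros Hx; apply Hn; now exists x).
  assert (HVx0 : V x0 <> 0%C) by (destruct Hx0 as [Hx0 | Hx0]; [now elim Hx0 | exact Hx0]).
  set (h := fun t => Cmod (V t) ^ 2 * phi0 t ^ 2).
  assert (Hh : forall x, h x = h x0).
  { intros x. apply constant_of_derive_zero. intros y. eapply is_derive_eq.
    - apply is_derive_Rmult; [apply is_derive_Cmod2, HV | apply is_derive_Rsqr, Hphi0].
    - rewrite HU0, !Cmod2_alt. destruct (V y). simpl. ring. }
  assert (Hc : 0 < h x0)
    by (apply Rmult_lt_0_compat; [apply Cmod2_pos, HVx0 | apply Hb]).
  assert (HM : 0 < M) by (pose proof (Hb x0); lra).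
  destruct (small_at_infinities_of_bounded_primitive _ (has_bounded_primitive_of_L2C V _ HLV HV)
              (h x0 / M) ltac:(apply Rdiv_lt_0_compat; lra) 0) as [[x [_ Hx]] _].
  assert (Hhx : Cmod (V x) ^ 2 * phi0 x ^ 2 = h x0) by apply (Hh x). pose proof (Hb x).
  pose proof (pow2_ge_0 (Cmod (V x))).
  assert (h x0 <= Cmod (V x) ^ 2 * M) by (rewrite <- Hhx; apply Rmult_le_compat_l; lra).
  apply (Rmult_lt_compat_r M) in Hx; [|lra]. unfold Rdiv in Hx.
  rewrite Rmult_assoc, Rinv_l, Rmult_1_r in Hx by lra. lra.
Qed.

Lemma dirac_second_order (dW : R -> R) : (forall x, is_derive W x (dW x)) ->
  forall x, is_derive (fun t => RtoC (W t) * U t + lam * V t)%C x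
                      ((RtoC (dW x + W x ^ 2) + lam * lam) * U x)%C.
Proof.
  intros HW x. eapply is_derive_Ceq.
  - apply is_derive_Cplus.
    + apply is_derive_Cmult; [apply is_derive_RtoC, HW | apply HU].
    + apply (is_derive_Cmult (fun _ => lam)); [apply is_derive_Cconst | apply HV].
  - replace (W x ^ 2) with (W x * W x) by ring. rewrite RtoC_plus, RtoC_mult. ring.
Qed.

End Dirac_system.

(** * The nonlinearity and the front *)

Section Nonlinearity.

Variable N : R -> R.
Hypothesis HN : nonlinearity N.

Lemma Derive_n_N_is_derive n s : 0 < s -> is_derive (Derive_n N n) s (Derive_n N (S n) s).
Proof. intros Hs. apply Derive_correct. destruct HN as [[Hd _] _]. exact (Hd (S n) s Hs). Qed.

Lemma N_is_derive s : 0 < s -> is_derive N s (Derive N s).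
Proof. exact (Derive_n_N_is_derive 0 s). Qed.

Lemma Derive_n_N_bounded n : exists C, forall s, 0 < s <= 1 -> Rabs (Derive_n N n s) <= C.
Proof.
  destruct HN as [[_ [_ Hlim]] _]. destruct (Hlim n) as [l Hl].
  apply (bounded_on_0_1_of_lim_at_right_0 _ l); auto.
  intros s Hs. eapply is_derive_continuous, Derive_n_N_is_derive, Hs.
Qed.

Lemma N_mean_value s t : 0 < s <= t ->
  exists c, s <= c <= t /\ N t - N s = Derive N c * (t - s).
Proof.
  intros Hst.
  destruct (MVT_gen N s t (Derive N)) as [c [Hc Heq]];
    rewrite ?Rmin_left, ?Rmax_right in * by lra.
  - intros x Hx. apply N_is_derive. lra.
  - intros x Hx. apply continuity_pt_filterlim, (is_derive_continuous _ _ (Derive N x)).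
    apply N_is_derive. lra.
  - now exists c.
Qed.

Lemma N_pos s : 0 <= s < 1 -> 0 < N s.
Proof.
  intros Hs. destruct HN as [_ [Hneg [H0 [H1 _]]]].
  destruct (Req_dec s 0) as [-> | Hs0]; [lra|].
  destruct (N_mean_value s 1) as [c [Hc Heq]]; [lra|].
  pose proof (Hneg c ltac:(lra)). rewrite H1 in Heq. nra.
Qed.

Lemma N_nonneg s : 0 <= s <= 1 -> 0 <= N s.
Proof.
  intros Hs. destruct (Req_dec s 1) as [-> | Hs1].
  - destruct HN as [_ [_ [_ [-> _]]]]. lra.
  - apply Rlt_le, N_pos. lra.
Qed.

Lemma N_le_linear : exists C, forall s, 0 < s <= 1 -> N s <= C * (1 - s).
Proof.
  destruct (Derive_n_N_bounded 1) as [C HC]. exists C.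
  intros s Hs. destruct HN as [_ [_ [_ [H1 _]]]].
  destruct (N_mean_value s 1) as [c [Hc Heq]]; [lra|].
  pose proof (HC c ltac:(lra)) as Hb. change (Rabs (Derive N c) <= C) in Hb.
  apply Rabs_le_inv in Hb. rewrite H1 in Heq. nra.
Qed.

Lemma N_bounded : exists C, forall s, 0 < s < 1 -> 0 < N s <= C.
Proof.
  destruct N_le_linear as [C HC]. exists C. intros s Hs.
  pose proof (N_pos s ltac:(lra)). pose proof (HC s ltac:(lra)). split; nra.
Qed.

End Nonlinearity.

Definition dWpot (N r0 : R -> R) (x : R) : R :=
  2 * r0 x ^ 2 * N (r0 x ^ 2) * (2 * Derive N (r0 x ^ 2) + r0 x ^ 2 * Derive_n N 2 (r0 x ^ 2)).

Definition ground_state (N r0 : R -> R) (x : R) : R := r0 x * sqrt (N (r0 x ^ 2)).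

Section Ground_state.

Variables N r0 : R -> R.
Hypothesis HN : nonlinearity N.
Hypothesis Hr : forall x, is_derive r0 x (r0 x * N (r0 x ^ 2)).
Hypothesis Hr0 : r0 0 = 1 / 2.

Lemma sq_r0_is_derive x : is_derive (fun t => r0 t ^ 2) x (2 * r0 x ^ 2 * N (r0 x ^ 2)).
Proof. eapply is_derive_eq; [apply is_derive_Rsqr, Hr | ring]. Qed.

(* [s = r0^2] solves [s' = 2 s N(s)], whose equilibria [0] and [1] cannot be reached:
   [|(s (1 - s))'| <= 2 C s (1 - s)] as long as [0 <= s <= 1]. *)
Lemma sq_r0_bounds x : 0 < r0 x ^ 2 < 1.
Proof.
  destruct (N_le_linear N HN) as [C HC].
  assert (Hm : forall x, 0 < r0 x ^ 2 * (1 - r0 x ^ 2)).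
  { apply (positive_of_log_derive_bounded (fun t => r0 t ^ 2 * (1 - r0 t ^ 2))
             (fun t => 2 * r0 t ^ 2 * N (r0 t ^ 2) * (1 - 2 * r0 t ^ 2)) (2 * C)).
    - intros t. eapply is_derive_eq.
      + apply is_derive_Rmult;
          [|apply is_derive_Rminus; [apply is_derive_Rconst|]]; apply sq_r0_is_derive.
      + cbv beta. ring.
    - rewrite Hr0. lra.
    - intros t Ht. set (s := r0 t ^ 2) in *.
      assert (Hs0 : 0 <= s) by apply pow2_ge_0.
      destruct (Req_dec s 0) as [Hz | Hnz].
      { rewrite Hz, !Rmult_0_r, !Rmult_0_l, Rabs_R0. lra. }
      assert (Hs1 : s <= 1) by nra.
      pose proof (N_nonneg N HN s ltac:(lra)). pose proof (HC s ltac:(lra)).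
      apply Rabs_le. split; nra. }
  pose proof (Hm x). pose proof (pow2_ge_0 (r0 x)). split; nra.
Qed.

Lemma Wpot_is_derive x : is_derive (Wpot N r0) x (dWpot N r0 x).
Proof.
  pose proof (sq_r0_bounds x) as Hs.
  pose proof (sq_r0_is_derive x) as Hsd.
  assert (HN0 := N_is_derive N HN (r0 x ^ 2) ltac:(lra)).
  assert (HN1 := Derive_n_N_is_derive N HN 1 (r0 x ^ 2) ltac:(lra)).
  unfold Wpot, dWpot. eapply is_derive_eq.
  - apply is_derive_Rplus.
    + exact (is_derive_Rcomp N (fun t => r0 t ^ 2) x _ _ HN0 Hsd).
    + apply is_derive_Rmult; [|exact Hsd].
      exact (is_derive_Rcomp (Derive N) (fun t => r0 t ^ 2) x _ _ HN1 Hsd).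
  - simpl. ring.
Qed.

Lemma Vpot_eq x : Vpot N r0 x = dWpot N r0 x + Wpot N r0 x ^ 2.
Proof. unfold Vpot. now rewrite (is_derive_unique _ _ _ (Wpot_is_derive x)). Qed.

Lemma Wpot_dWpot_bounded :
  exists Wm M, forall x, Rabs (Wpot N r0 x) <= Wm /\ Rabs (dWpot N r0 x) <= M.
Proof.
  destruct (N_bounded N HN) as [C0 HC0].
  destruct (Derive_n_N_bounded N HN 1) as [C1 HC1].
  destruct (Derive_n_N_bounded N HN 2) as [C2 HC2].
  exists (C0 + C1 * 1), (2 * 1 * C0 * (2 * C1 + 1 * C2)). intros x.
  pose proof (sq_r0_bounds x) as Hs. unfold Wpot, dWpot. set (s := r0 x ^ 2) in *.
  assert (HN0 : Rabs (N s) <= C0)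
    by (destruct (HC0 s Hs); rewrite Rabs_pos_eq; lra).
  assert (HN1 : Rabs (Derive N s) <= C1) by exact (HC1 s ltac:(lra)).
  assert (HN2 : Rabs (Derive_n N 2 s) <= C2) by exact (HC2 s ltac:(lra)).
  assert (Hs1 : Rabs s <= 1) by (rewrite Rabs_pos_eq; lra).
  assert (H2 : Rabs 2 <= 2) by (rewrite Rabs_pos_eq; lra).
  split.
  - eapply Rle_trans; [apply Rabs_triang|].
    apply Rplus_le_compat; [exact HN0 | exact (Rabs_mult_le _ _ _ _ HN1 Hs1)].
  - apply Rabs_mult_le; [apply Rabs_mult_le; [exact (Rabs_mult_le _ _ _ _ H2 Hs1) | exact HN0]|].
    eapply Rle_trans; [apply Rabs_triang|].
    apply Rplus_le_compat; apply Rabs_mult_le; assumption.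
Qed.

Lemma Wpot_Vpot_bounded :
  exists Wm Vm, forall x, Rabs (Wpot N r0 x) <= Wm /\ Rabs (Vpot N r0 x) <= Vm.
Proof.
  destruct Wpot_dWpot_bounded as [Wm [M HB]]. exists Wm, (M + Wm * Wm).
  intros x. destruct (HB x) as [HW HdW]. split; auto.
  rewrite Vpot_eq. eapply Rle_trans; [apply Rabs_triang|].
  pose proof (Rabs_mult_le _ _ _ _ HW HW). simpl. rewrite Rmult_1_r. lra.
Qed.

Lemma ground_state_sq x : ground_state N r0 x ^ 2 = r0 x ^ 2 * N (r0 x ^ 2).
Proof.
  pose proof (sq_r0_bounds x). pose proof (N_pos N HN (r0 x ^ 2) ltac:(lra)).
  unfold ground_state. rewrite Rpow_mult_distr, pow2_sqrt; lra.
Qed.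

Lemma ground_state_is_derive x :
  is_derive (ground_state N r0) x (Wpot N r0 x * ground_state N r0 x).
Proof.
  pose proof (sq_r0_bounds x). pose proof (N_pos N HN (r0 x ^ 2) ltac:(lra)) as Hn.
  assert (Hd : is_derive (fun t => N (r0 t ^ 2)) x
                 (Derive N (r0 x ^ 2) * (2 * r0 x ^ 2 * N (r0 x ^ 2))))
    by (apply (is_derive_Rcomp N (fun t => r0 t ^ 2)); [apply (N_is_derive N HN); lra |];
        apply sq_r0_is_derive).
  unfold ground_state. eapply is_derive_eq.
  - apply is_derive_Rmult; [apply Hr | apply (is_derive_sqrt _ _ _ Hd Hn)].
  - unfold Wpot. pose proof (sqrt_lt_R0 _ Hn). pose proof (sqrt_sqrt _ (Rlt_le _ _ Hn)) as Hsq.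
    set (q := sqrt (N (r0 x ^ 2))) in *. rewrite <- Hsq. field. lra.
Qed.

Lemma ground_state_sq_bounds : exists M, forall x, 0 < ground_state N r0 x ^ 2 <= M.
Proof.
  destruct (N_bounded N HN) as [C HC]. exists C. intros x.
  rewrite ground_state_sq. pose proof (sq_r0_bounds x). pose proof (HC (r0 x ^ 2) ltac:(lra)).
  split; nra.
Qed.

Lemma L2C_ground_state : L2C (fun x => RtoC (ground_state N r0 x)).
Proof.
  assert (Hmod : forall x, Cmod (RtoC (ground_state N r0 x)) ^ 2 = ground_state N r0 x ^ 2)
    by (intros x; rewrite Cmod_R; apply pow2_abs).
  unfold L2C.
  apply (ex_RInt_gen_of_bounded_increasing_primitive (fun t => / 2 * r0 t ^ 2)
           (fun x => Cmod (RtoC (ground_state N r0 x)) ^ 2) 0 (1 / 2)).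
  - intros x. eapply is_derive_eq; [apply is_derive_scal, sq_r0_is_derive|].
    rewrite Hmod, ground_state_sq. field.
  - intros x. apply (continuous_ext (fun t => ground_state N r0 t ^ 2)).
    + intros t. now rewrite Hmod.
    + exact (is_derive_continuous _ _ _ (is_derive_Rsqr _ _ _ (ground_state_is_derive x))).
  - intros x. apply pow2_ge_0.
  - intros x. pose proof (sq_r0_bounds x). lra.
Qed.

Lemma eigenpair_ground_state : eigenpair N r0 0%C (fun x => RtoC (ground_state N r0 x)).
Proof.
  split; [apply L2C_ground_state | split].
  - exists 0. intros Heq. apply (f_equal Re) in Heq. simpl in Heq.
    destruct ground_state_sq_bounds as [M HM]. pose proof (HM 0) as H0. rewrite Heq in H0. lra.
  - exists (fun x => RtoC (Wpot N r0 x * ground_state N r0 x)). intros x. split.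
    + apply is_derive_RtoC, ground_state_is_derive.
    + eapply is_derive_Ceq.
      * apply is_derive_RtoC, is_derive_Rmult;
          [apply Wpot_is_derive | apply ground_state_is_derive].
      * rewrite Vpot_eq. apply injective_projections; simpl; ring.
Qed.

End Ground_state.

Theorem lemma8p5 (N r0 : R -> R) (lam : C) (U V : R -> C) :
  nonlinearity N ->
  (forall x, is_derive r0 x (r0 x * N (r0 x ^ 2))) ->
  r0 0 = 1 / 2 ->
  L2C U -> L2C V ->
  (exists x, U x <> 0%C \/ V x <> 0%C) ->
  (forall x, is_derive U x (RtoC (Wpot N r0 x) * U x + lam * V x)%C) ->
  (forall x, is_derive V x (lam * U x - RtoC (Wpot N r0 x) * V x)%C) ->
  (* (i) *)
  (Im (- (lam * lam))%C = 0 /\ eigenpair N r0 (- (lam * lam))%C U) /\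
  (* (ii) E = 0 is the lowest eigenvalue *)
  ((exists phi, eigenpair N r0 0%C phi) /\
   (forall (E : C) phi, eigenpair N r0 E phi -> Im E = 0 /\ 0 <= Re E)).
Proof.
  intros HN Hr Hr0 HLU HLV Hnz HU HV.
  pose proof (Wpot_is_derive N r0 HN Hr Hr0) as HW.
  pose proof (Vpot_eq N r0 HN Hr Hr0) as HVpot.
  destruct (Wpot_Vpot_bounded N r0 HN Hr Hr0) as [Wm [Vm HB]].
  destruct (ground_state_sq_bounds N r0 HN Hr Hr0) as [M HM].
  pose proof (dirac_Re_lambda _ _ _ _ HU HV HLU HLV Hnz) as Hlam.
  split; [split|split].
  - destruct lam as [a b]. simpl in *. subst a. ring.
  - split; [exact HLU | split].
    + exact (dirac_U_nonzero _ _ _ _ HV _ M (ground_state_is_derive N r0 HN Hr Hr0) HM HLV Hnz).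
    + exists (fun t => RtoC (Wpot N r0 t) * U t + lam * V t)%C. intros x. split; [apply HU|].
      eapply is_derive_Ceq; [exact (dirac_second_order _ _ _ _ HU HV _ HW x)|].
      rewrite HVpot. ring.
  - exists (fun x => RtoC (ground_state N r0 x)). now apply eigenpair_ground_state.
  - intros E phi [HL [[x0 Hx0] [dphi Hd]]].
    apply (eigenvalue_real_nonneg (Wpot N r0) (dWpot N r0) (Vpot N r0) Wm Vm HW HVpot
             (fun x => proj1 (HB x)) (fun x => proj2 (HB x)) E phi dphi x0 HL Hx0);
      intros x; apply Hd.
Qed.
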